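(* Let $D$ be a finite distributive lattice with exactly two coatoms and let $Q=D\setminus\{1_D\}$. Then there is no algebra $A$ with a lattice isomorphism $\phi\colon\mathrm{Con}(A)\to D$ such that $\phi(\mathrm{Princ}(A))=Q$.
   Context: For an algebra $A$, $\mathrm{Con}(A)$ is its congruence lattice and $\mathrm{Princ}(A)$ its set of principal congruences $\mathrm{con}(a,b)$, $a,b\in A$. *)

From HB Require Import structures.
From mathcomp Require Import all_boot all_order.
Set Implicit Arguments. Unset Strict Implicit. Unset Printing Implicit Defensive.
Import Order.TTheory.
Local Open Scope order_scope.

Record algebra := Algebra {
  carrier : Type;
  opsym : Type;
  arity : opsym -> nat;
  ops : forall f : opsym, ('I_(arity f) -> carrier) -> carrier
}.

Definition rel_sub (A : Type) (r s : A -> A -> Prop) := forall x y, r x y -> s x y.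

Definition is_congruence (A : algebra) (r : carrier A -> carrier A -> Prop) :=
  [/\ (forall x, r x x),
      (forall x y, r x y -> r y x),
      (forall x y z, r x y -> r y z -> r x z) &
      (forall (f : opsym A) (u v : 'I_(arity f) -> carrier A),
          (forall i, r (u i) (v i)) -> r (ops u) (ops v))].

Definition con (A : algebra) (a b : carrier A) : carrier A -> carrier A -> Prop :=
  fun x y => forall r, is_congruence r -> r a b -> r x y.

(* A lattice isomorphism Con(A) -> D, i.e. a bijection between the congruences
   of A (up to extensional equality) and D which preserves and reflects the order. *)
Definition con_lattice_iso (A : algebra) (disp : Order.disp_t) (D : porderType disp)
    (phi : (carrier A -> carrier A -> Prop) -> D) :=
  (forall r s, is_congruence r -> is_congruence s ->
      (rel_sub r s <-> phi r <= phi s)) /\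
  (forall d : D, exists2 r, is_congruence r & phi r = d).

Definition coatom (disp : Order.disp_t) (D : finTBDistrLatticeType disp) (x : D) : bool :=
  (x < \top) && [forall y : D, ~~ ((x < y) && (y < \top))].

(** If every principal congruence of [A] were below one of the two coatoms
    [alpha] and [beta] of [Con(A)], every pair of elements would be related by
    [alpha] or by [beta].  But when the union of two equivalence relations is
    the full relation, one of them already is, and a coatom is not the top. *)

From HB Require Import structures.
From mathcomp Require Import all_boot all_order.
From Stdlib Require Import Classical.
Set Implicit Arguments.
Unset Strict Implicit.
Unset Printing Implicit Defensive.
Import Order.TTheory.
Local Open Scope order_scope.

Lemma con_congruence (A : algebra) (a b : carrier A) : is_congruence (con a b).
Proof.
split.
- by move=> x r [refl _ _ _] _; apply: refl.
- by move=> x y rxy r cong_r rab; case: (cong_r) => _ sym _ _; apply: sym; apply: rxy.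
- move=> x y z rxy ryz r cong_r rab; case: (cong_r) => _ _ trans _.
  by apply: (trans _ y); [apply: rxy | apply: ryz].
- move=> f u v ruv r cong_r rab; case: (cong_r) => _ _ _ compat.
  by apply: compat => i; apply: ruv.
Qed.

Lemma con_lattice_iso_con_le (A : algebra) (disp : Order.disp_t)
    (D : porderType disp) (phi : (carrier A -> carrier A -> Prop) -> D)
    (r : carrier A -> carrier A -> Prop) (a b : carrier A) :
  con_lattice_iso phi -> is_congruence r -> phi (con a b) <= phi r -> r a b.
Proof.
by move=> [iso _] cong_r /(iso _ _ (con_congruence a b) cong_r); apply.
Qed.

Lemma coatom_lt_top (disp : Order.disp_t) (D : finTBDistrLatticeType disp) (c : D) :
  coatom c -> c < \top.
Proof. by case/andP. Qed.

Lemma exists_coatom_ge (disp : Order.disp_t) (D : finTBDistrLatticeType disp) (x : D) :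
  x < \top -> exists2 c, coatom c & x <= c.
Proof.
move: {2}#|_| (leqnn #|[set y : D | x < y]|) => n.
elim: n x => [|n IHn] x card_up x_lt1.
  by move: card_up; rewrite leqn0 => /eqP/cards0_eq/setP/(_ \top); rewrite !inE x_lt1.
have [coatom_x | ] := boolP (coatom x); first by exists x.
rewrite /coatom x_lt1 negb_forall => /existsP[y]; rewrite negbK => /andP[xy y_lt1].
have up_y_proper : [set z : D | y < z] \proper [set z : D | x < z].
  apply/properP; split; last by exists y; rewrite !inE ?ltxx.
  by apply/subsetP => z; rewrite !inE => /(lt_trans xy).
have [|c coatom_c yc] := IHn y _ y_lt1.
  by rewrite -ltnS (leq_trans (proper_card up_y_proper)).
by exists c; rewrite // (le_trans (ltW xy) yc).
Qed.

Lemma cover_by_equivalences_total (T : Type) (al be : T -> T -> Prop) :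
  (forall x y, al x y -> al y x) -> (forall x y z, al x y -> al y z -> al x z) ->
  (forall x y, be x y -> be y x) -> (forall x y z, be x y -> be y z -> be x z) ->
  (forall x y, al x y \/ be x y) ->
  (forall x y, al x y) \/ (forall x y, be x y).
Proof.
move=> al_sym al_trans be_sym be_trans cover.
have [al_total | ] := classic (forall x y, al x y); first by left.
move=> /not_all_ex_not[x /not_all_ex_not[y nal_xy]]; right => u v.
apply: NNPP => nbe_uv.
have be_xy : be x y by case: (cover x y).
have al_uv : al u v by case: (cover u v).
(* [x] cannot be [al]-related to [u]: it would force [al x y] or [be u v]. *)
have nal_xu : ~ al x u.
  move=> al_xu; have be_yu : be y u.
    case: (cover y u) => // al_yu; case: nal_xy.
    by apply: (al_trans _ u) => //; apply: al_sym.
  case: (cover y v) => [al_yv | be_yv].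
    by apply: nal_xy; apply: (al_trans _ u) => //; apply: (al_trans _ v) => //; apply: al_sym.
  by apply: nbe_uv; apply: (be_trans _ y) => //; apply: be_sym.
case: (cover x u) => [// | be_xu].
case: (cover x v) => [al_xv | be_xv].
  by apply: nal_xu; apply: (al_trans _ v) => //; apply: al_sym.
by apply: nbe_uv; apply: (be_trans _ x) => //; apply: be_sym.
Qed.

Lemma con_lattice_iso_coatom_not_total (A : algebra) (disp : Order.disp_t)
    (D : finTBDistrLatticeType disp) (phi : (carrier A -> carrier A -> Prop) -> D)
    (r : carrier A -> carrier A -> Prop) :
  con_lattice_iso phi -> is_congruence r -> coatom (phi r) ->
  ~ forall x y, r x y.
Proof.
move=> [iso onto] cong_r /coatom_lt_top; rewrite lt_neqAle lex1 andbT => r_neq1 r_total.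
have [t cong_t phi_t] := onto \top.
have : phi t <= phi r by apply/(iso _ _ cong_t cong_r) => x y _; apply: r_total.
by rewrite phi_t le1x (negbTE r_neq1).
Qed.

Theorem mainTheorem12 (disp : Order.disp_t) (D : finTBDistrLatticeType disp) :
  #|[set x : D | coatom x]| = 2 ->
  ~ exists (A : algebra) (phi : (carrier A -> carrier A -> Prop) -> D),
      con_lattice_iso phi /\
      (forall a b : carrier A, phi (con a b) != \top) /\
      (forall d : D, d != \top -> exists a b : carrier A, phi (con a b) = d).
Proof.
move=> /eqP/cards2P[c1 [c2 [_ coatomsE]]] [A [phi [iso [con_neq1 _]]]].
have coatomP c : coatom c = (c == c1) || (c == c2).
  by move/setP/(_ c): coatomsE; rewrite !inE.
have [al cong_al phi_al] := iso.2 c1.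
have [be cong_be phi_be] := iso.2 c2.
have cover a b : al a b \/ be a b.
  have [c] : exists2 c, coatom c & phi (con a b) <= c.
    by apply: exists_coatom_ge; rewrite lt_neqAle con_neq1 lex1.
  rewrite coatomP => /orP[] /eqP-> le_c.
    by left; apply: (con_lattice_iso_con_le iso cong_al); rewrite phi_al.
  by right; apply: (con_lattice_iso_con_le iso cong_be); rewrite phi_be.
have [_ al_sym al_trans _] := cong_al; have [_ be_sym be_trans _] := cong_be.
have [] := cover_by_equivalences_total al_sym al_trans be_sym be_trans cover.
  by apply: (con_lattice_iso_coatom_not_total iso cong_al); rewrite phi_al coatomP eqxx.
by apply: (con_lattice_iso_coatom_not_total iso cong_be); rewrite phi_be coatomP eqxx orbT.
Qed.
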